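(* Let $\mathcal{H}_B$ be the two-mode bosonic Fock space with orthonormal basis $\{\lvert m_1, m_0\rangle_B : m_1, m_0 \ge 0\}$, where $\lvert m_1,m_0\rangle_B$ denotes $m_1$ photons in the ''$1$'' mode and $m_0$ photons in the ''$0$'' mode. Let $\mathcal{H}_E$ be a Hilbert space. Let $$\lvert\psi_0\rangle = \sum_{m_1\ge 0,\, m_0\ge 0} \lvert m_1,m_0\rangle_B \lvert e_{m_1,m_0}\rangle_E \in \mathcal{H}_B\otimes\mathcal{H}_E$$ be a unit vector, where the $\lvert e_{m_1,m_0}\rangle_E\in\mathcal{H}_E$ are (unnormalized) vectors. Let $U_R$ be a unitary operator on $\mathcal{H}_B\otimes\mathcal{H}_E$ such that for all $m_1,m_0\ge 0$, $$U_R \lvert m_1,m_0\rangle_B\lvert e_{m_1,m_0}\rangle_E = \lvert 0,1\rangle_B \lvert g^{0,1}_{m_1,m_0}\rangle_E + \lvert 1,0\rangle_B \lvert g^{1,0}_{m_1,m_0}\rangle_E + \lvert 0,0\rangle_B \lvert g^{0,0}_{m_1,m_0}\rangle_E$$ for some vectors $\lvert g^{j,k}_{m_1,m_0}\rangle_E\in\mathcal{H}_E$. Define $$\lvert h_0\rangle_E = \frac{1}{\sqrt 2}\sum_{m_1\ge 1,\, m_0\ge 1}\lvert g^{0,1}_{m_1,m_0}\rangle_E,\qquad \lvert h_1\rangle_E = \frac{1}{\sqrt 2}\sum_{m_1\ge 1,\, m_0\ge 1}\lvert g^{1,0}_{m_1,m_0}\rangle_E,$$ and $$p_{\mathrm{double}}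 = \sum_{m_1\ge 1,\, m_0\ge 1}\langle e_{m_1,m_0}\vert e_{m_1,m_0}\rangle_E .$$ Then $\langle h_0\vert h_0\rangle_E \le \frac12 p_{\mathrm{double}}$ and $\langle h_1\vert h_1\rangle_E \le \frac12 p_{\mathrm{double}}$.
   Context: $p_{\mathrm{double}}$ is the probability that a computational-basis photon-number measurement of the $B$ system of $\lvert\psi_0\rangle$ yields at least one photon in each of the two modes (a ''double-click''). Infinite sums are understood as norm-convergent sums in the respective Hilbert spaces. *)

From HB Require Import structures.
From mathcomp Require Import all_boot all_order all_algebra.
From mathcomp Require Import complex.
From mathcomp Require Import reals.
Set Implicit Arguments.
Unset Strict Implicit.
Unset Printing Implicit Defensive.
Import Order.TTheory GRing.Theory Num.Theory.
Local Open Scope ring_scope.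
Local Open Scope complex_scope.

Section Defs.
Variable R : realType.
Local Notation C := R[i].

(* Inner product (physics convention: antilinear in the first argument,
   linear in the second) on a complex vector space E. *)
Definition is_inner_product (E : lmodType C) (ip : E -> E -> C) : Prop :=
  [/\ (forall (a : C) (x y z : E), ip x (a *: y + z) = a * ip x y + ip x z),
      (forall x y : E, ip y x = (ip x y)^*),
      (forall x : E, 0 <= ip x x)
    & (forall x : E, ip x x = 0 -> x = 0)].

Definition nsq (E : lmodType C) (ip : E -> E -> C) (x : E) : R := complex.Re (ip x x).

Definition ip_complete (E : lmodType C) (ip : E -> E -> C) : Prop :=
  forall u : nat -> E,
    (forall eps : R, 0 < eps -> exists N : nat, forall m n : nat,
        (N <= m)%N -> (N <= n)%N -> nsq ip (u m - u n) < eps) ->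
    exists l : E, forall eps : R, 0 < eps -> exists N : nat, forall n : nat,
        (N <= n)%N -> nsq ip (u n - l) < eps.

Definition is_hilbert (E : lmodType C) (ip : E -> E -> C) : Prop :=
  is_inner_product ip /\ ip_complete ip.

(* Unordered (norm-)convergent sum over the index set {i | P i}:
   the net of finite partial sums converges to S w.r.t. the
   "size" function d (d = squared norm, or modulus). *)
Definition has_sum (V : zmodType) (d : V -> R) (I : eqType)
    (P : pred I) (f : I -> V) (S : V) : Prop :=
  forall eps : R, 0 < eps -> exists s0 : seq I, all P s0 /\
    forall s : seq I, uniq s -> all P s -> {subset s0 <= s} ->
      d (\sum_(i <- s) f i - S) < eps.

Definition Chas_sum (I : eqType) (P : pred I) (f : I -> C) (S : C) : Prop :=
  has_sum (fun z : C => complex.Re `|z|) P f S.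

Definition Ehas_sum (E : lmodType C) (ip : E -> E -> C)
    (I : eqType) (P : pred I) (f : I -> E) (S : E) : Prop :=
  has_sum (nsq ip) P f S.

(* Two-mode Fock space tensor H_E, realised as l^2(N x N; H_E):
   the vector  sum_{m} |m1,m0>_B |v_m>_E  is the function m |-> v_m. *)
Definition state (E : lmodType C) := (nat * nat -> E)%type.

Definition l2_norm_sq (E : lmodType C) (ip : E -> E -> C) (f : state E) (s : C) :=
  Chas_sum predT (fun m => ip (f m) (f m)) s.

Definition in_l2 (E : lmodType C) (ip : E -> E -> C) (f : state E) :=
  exists s, l2_norm_sq ip f s.

Definition ket (E : lmodType C) (m : nat * nat) (v : E) : state E :=
  fun k => if k == m then v else 0.

Definition unitary (E : lmodType C) (ip : E -> E -> C)
    (U : state E -> state E) : Prop :=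
  [/\ (forall (a b : C) (f g : state E), in_l2 ip f -> in_l2 ip g ->
         U (fun m => a *: f m + b *: g m) = (fun m => a *: U f m + b *: U g m)),
      (forall (f : state E) (s : C), l2_norm_sq ip f s -> l2_norm_sq ip (U f) s)
    & (forall g : state E, in_l2 ip g -> exists f, in_l2 ip f /\ U f = g)].

End Defs.

From HB Require Import structures.
From mathcomp Require Import all_boot all_order all_algebra.
From mathcomp Require Import complex.
From mathcomp Require Import reals.
From mathcomp Require Import ring lra.
From Stdlib Require Import FunctionalExtensionality.
Set Implicit Arguments.
Unset Strict Implicit.
Unset Printing Implicit Defensive.
Import Order.TTheory GRing.Theory Num.Theory.
Local Open Scope ring_scope.
Local Open Scope complex_scope.

(** For a finite set s of photon numbers, the truncation of psi_0 to s is a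
    finitely supported state; U maps it to
    |0,1>|sum_s g01> + |1,0>|sum_s g10> + |0,0>|sum_s g00>, so unitarity gives
    ||sum_s g01||^2 + ||sum_s g10||^2 + ||sum_s g00||^2 = sum_s <e_m|e_m>,
    whence ||sum_s g01||^2, ||sum_s g10||^2 <= sum_s <e_m|e_m>.  Both sides
    converge along the finite subsets of {m1 >= 1, m0 >= 1}, and the squared
    norm is lower semicontinuous, so ||S0||^2, ||S1||^2 <= p_double; the
    factor 1/sqrt 2 then gives the bound p_double / 2. *)

Lemma ler_addgt0Mr (R : realFieldType) (x y c : R) :
  (forall d, 0 < d -> x <= y + d * c) -> x <= y.
Proof.
move=> H; apply/ler_addgt0Pr => e e0.
have c1 : 0 < `|c| + 1 by rewrite ltr_pwDr ?normr_ge0.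
apply: (le_trans (H _ (divr_gt0 e0 c1))); rewrite lerD2l.
rewrite -[leRHS](divfK (lt0r_neq0 c1)) ler_wpM2l ?divr_ge0 ?ltW //.
by apply: (le_lt_trans (ler_norm c)); rewrite ltrDl.
Qed.

Section UnorderedSums.
Variable R : realType.

Lemma Re_le_normc (z : R[i]) : complex.Re z <= complex.Re `|z|.
Proof.
rewrite normc_def /= (le_trans (ler_norm _)) // -sqrtr_sqr ler_sqrt ?lerDl ?sqr_ge0 //.
by rewrite addr_ge0 ?sqr_ge0.
Qed.

Lemma Im_le_normc (z : R[i]) : `|complex.Im z| <= complex.Re `|z|.
Proof.
rewrite normc_def /= -sqrtr_sqr ler_sqrt ?lerDr ?sqr_ge0 //.
by rewrite addr_ge0 ?sqr_ge0.
Qed.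

Lemma common_refinement (I : eqType) (P : pred I) (s1 s2 : seq I) :
  all P s1 -> all P s2 ->
  exists s, [/\ uniq s, all P s, {subset s1 <= s} & {subset s2 <= s}].
Proof.
move=> Ps1 Ps2; exists (undup (s1 ++ s2)); split; first exact: undup_uniq.
- by rewrite all_undup all_cat Ps1.
- by move=> x xs; rewrite mem_undup mem_cat xs.
- by move=> x xs; rewrite mem_undup mem_cat xs orbT.
Qed.

Lemma big_supp_sub (I : eqType) (V : nmodType) (F : I -> V) (L s : seq I) :
  uniq L -> uniq s -> {subset L <= s} -> (forall k, k \notin L -> F k = 0) ->
  \sum_(i <- s) F i = \sum_(i <- L) F i.
Proof.
move=> uL us sub supp.
rewrite (bigID (mem L)) /= [X in _ + X]big1 ?addr0; last by move=> i /supp.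
rewrite -big_filter; apply: perm_big; apply: uniq_perm; rewrite ?filter_uniq //.
by move=> i; rewrite mem_filter; case iL: (i \in L) => //=; apply: sub.
Qed.

Lemma Chas_sum_finsupp (I : eqType) (f : I -> R[i]) (L : seq I) :
  uniq L -> (forall k, k \notin L -> f k = 0) ->
  Chas_sum predT f (\sum_(i <- L) f i).
Proof.
move=> uL supp eps eps0; exists L; split; first exact/allP.
by move=> s us _ sub; rewrite (big_supp_sub uL us sub supp) subrr normr0.
Qed.

Lemma Chas_sum_unique (I : eqType) (P : pred I) (f : I -> R[i]) S S' :
  Chas_sum P f S -> Chas_sum P f S' -> S = S'.
Proof.
move=> sumS sumS'; apply/eqP; rewrite -subr_eq0 -normr_le0.
suff le0 : complex.Re `|S - S'| <= 0.
  by rewrite lecE /= le0 andbT.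
apply/ler_addgt0Pr => e e0; rewrite add0r.
have e20 : 0 < e / 2 by rewrite divr_gt0.
have [s1 [Ps1 near1]] := sumS _ e20; have [s2 [Ps2 near2]] := sumS' _ e20.
have [s [us Ps s1s s2s]] := common_refinement Ps1 Ps2.
have := near1 _ us Ps s1s; have := near2 _ us Ps s2s.
have -> : S - S' = (\sum_(i <- s) f i - S') - (\sum_(i <- s) f i - S) by ring.
have := ler_normD (\sum_(i <- s) f i - S') (- (\sum_(i <- s) f i - S)).
rewrite normrN lecE raddfD /= => /andP[_]; lra.
Qed.

Lemma Chas_sum_ge0 (I : eqType) (P : pred I) (f : I -> R[i]) S :
  (forall i, P i -> 0 <= f i) -> Chas_sum P f S -> 0 <= S.
Proof.
move=> f_ge0 sumS.
have near_sum e : 0 < e -> `|complex.Im S| <= 0 + e /\ - complex.Re S <= 0 + e.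
  move=> e0; have [s0 [Ps0 nearS]] := sumS _ e0.
  have [s [us Ps s0s _]] := common_refinement Ps0 Ps0.
  have := nearS _ us Ps s0s.
  have : 0 <= \sum_(i <- s) f i.
    by rewrite big_seq sumr_ge0 // => i /(allP Ps); apply: f_ge0.
  have := Re_le_normc (\sum_(i <- s) f i - S).
  have := Im_le_normc (\sum_(i <- s) f i - S).
  rewrite lecE !raddfB /=; case: (\sum_(i <- s) f i) => a b /=.
  move=> ImS ReS /andP[/eqP b0 a0]; subst b; rewrite sub0r normrN in ImS; lra.
rewrite lecE /= -normr_le0 -oppr_le0.
by apply/andP; split; apply/ler_addgt0Pr => e /near_sum[].
Qed.

End UnorderedSums.

Section InnerProduct.
Variables (R : realType) (E : lmodType R[i]) (ip : E -> E -> R[i]).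
Hypothesis ip_inner : is_inner_product ip.

Lemma ipDr x y z : ip x (y + z) = ip x y + ip x z.
Proof. by case: ip_inner => lin _ _ _; have := lin 1 x y z; rewrite scale1r mul1r. Qed.

Lemma ip0r x : ip x 0 = 0.
Proof. by apply: (addrI (ip x 0)); rewrite -ipDr !addr0. Qed.

Lemma ipZr a x y : ip x (a *: y) = a * ip x y.
Proof. by case: ip_inner => lin _ _ _; have := lin a x y 0; rewrite !addr0 ip0r addr0. Qed.

Lemma ipC x y : ip y x = conjc (ip x y).
Proof. by case: ip_inner. Qed.

Lemma ipDl x y z : ip (x + y) z = ip x z + ip y z.
Proof. by rewrite ipC ipDr rmorphD /= -!ipC. Qed.

Lemma ipZl a x y : ip (a *: x) y = conjc a * ip x y.
Proof. by rewrite ipC ipZr rmorphM /= -ipC. Qed.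

Lemma ip_ge0 x : 0 <= ip x x.
Proof. by case: ip_inner. Qed.

Lemma nsq_ge0 x : 0 <= nsq ip x.
Proof. by have := ip_ge0 x; rewrite lecE => /andP[]. Qed.

Lemma ip_nsq x : ip x x = (nsq ip x)%:C.
Proof. by rewrite /nsq; case: (ip x x) (ger0_Im (ip_ge0 x)) => a b /= ->. Qed.

Lemma nsqD x y : nsq ip (x + y) = nsq ip x + nsq ip y + 2 * complex.Re (ip x y).
Proof.
rewrite /nsq ipDl !ipDr (ipC x y) !raddfD /=.
by case: (ip x y) => a b /=; ring.
Qed.

Lemma ipNr x y : ip x (- y) = - ip x y.
Proof. by rewrite -scaleN1r ipZr mulN1r. Qed.

Lemma nsqN x : nsq ip (- x) = nsq ip x.
Proof. by rewrite /nsq ipNr ipC ipNr rmorphN /= -ipC opprK. Qed.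

Lemma nsqZ (k : R) x : nsq ip (k%:C *: x) = k ^+ 2 * nsq ip x.
Proof. by rewrite /nsq ipZl ipZr conjc_real mulrA ip_nsq -!rmorphM /= expr2. Qed.

(* Young's inequality 2 Re <x|y> <= t ||x||^2 + ||y||^2 / t, from 0 <= ||t x - y||^2. *)
Lemma nsqD_le x y t : 0 < t ->
  nsq ip (x + y) <= (1 + t) * nsq ip x + (1 + t^-1) * nsq ip y.
Proof.
move=> t0; rewrite nsqD.
have := nsq_ge0 (t%:C *: x - y).
rewrite nsqD nsqZ nsqN ipZl conjc_real ipNr.
case: (ip x y) => a b /=; rewrite mul0r subr0 => H.
have : 0 <= t^-1 * (t ^+ 2 * nsq ip x + nsq ip y + 2 * (t * - a)).
  by rewrite mulr_ge0 // invr_ge0 ltW.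
have -> : t^-1 * (t ^+ 2 * nsq ip x + nsq ip y + 2 * (t * - a)) =
          t * nsq ip x + t^-1 * nsq ip y - 2 * a by field; rewrite gt_eqF.
nra.
Qed.

Lemma nsq_le_of_approx (S : E) (p : R) :
  (forall d, 0 < d -> exists A, nsq ip A <= p + d /\ nsq ip (A - S) < d) ->
  nsq ip S <= p.
Proof.
move=> approx.
have nsqS_le t : 0 < t -> nsq ip S <= p + t * p.
  move=> t0; apply: (ler_addgt0Mr (c := (1 + t) + (1 + t^-1))) => d d0.
  have [A [nsqA nsqAS]] := approx d d0.
  have := nsqD_le A (S - A) t0; rewrite addrC subrK -(nsqN (S - A)) opprB.
  have := nsq_ge0 A; have tV0 : 0 < t^-1 by rewrite invr_gt0.
  nra.
exact: ler_addgt0Mr nsqS_le.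
Qed.

Lemma nsq_half_le (S : E) (p : R[i]) : 0 <= p -> nsq ip S <= complex.Re p ->
  ip ((sqrtC 2)^-1 *: S) ((sqrtC 2)^-1 *: S) <= p / 2.
Proof.
move=> p_ge0 le_Sp.
have c_ge0 : 0 <= (sqrtC 2)^-1 :> R[i] by rewrite invr_ge0 sqrtC_ge0 ler0n.
have c_real : conjc (sqrtC 2)^-1 = (sqrtC 2)^-1 :> R[i] := geC0_conj c_ge0.
rewrite ipZl ipZr c_real mulrA -expr2 exprVn sqrtCK mulrC.
rewrite ler_wpM2r ?invr_ge0 ?ler0n // ip_nsq lecE /= (ger0_Im p_ge0) eqxx.
exact: le_Sp.
Qed.

Lemma Ehas_sum_nsq_le (I : eqType) (P : pred I) (g : I -> E) (a : I -> R[i])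
    (S : E) (p : R[i]) :
  (forall s, uniq s -> all P s ->
     nsq ip (\sum_(i <- s) g i) <= complex.Re (\sum_(i <- s) a i)) ->
  Ehas_sum ip P g S -> Chas_sum P a p -> nsq ip S <= complex.Re p.
Proof.
move=> dom sumS sump; apply: nsq_le_of_approx => // d d0.
have [s1 [Ps1 near1]] := sumS _ d0; have [s2 [Ps2 near2]] := sump _ d0.
have [s [us Ps s1s s2s]] := common_refinement Ps1 Ps2.
exists (\sum_(i <- s) g i); split; last exact: near1.
have := Re_le_normc (\sum_(i <- s) a i - p).
have := near2 _ us Ps s2s; have := dom _ us Ps.
rewrite raddfB /=; lra.
Qed.

End InnerProduct.

Section FockSpace.
Variables (R : realType) (E : lmodType R[i]) (ip : E -> E -> R[i]).
Hypothesis ip_inner : is_inner_product ip.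

Lemma l2_norm_sq_finsupp (f : state E) (L : seq (nat * nat)) : uniq L ->
  (forall k, k \notin L -> f k = 0) ->
  l2_norm_sq ip f (\sum_(k <- L) ip (f k) (f k)).
Proof. by move=> uL supp; apply: Chas_sum_finsupp => // k /supp ->; rewrite ip0r. Qed.

Lemma in_l2_finsupp (f : state E) (L : seq (nat * nat)) :
  (forall k, k \notin L -> f k = 0) -> in_l2 ip f.
Proof.
move=> supp; eexists; apply: (l2_norm_sq_finsupp (undup_uniq L)) => k.
by rewrite mem_undup; apply: supp.
Qed.

Definition truncate (s : seq (nat * nat)) (f : state E) : state E :=
  fun k => if k \in s then f k else 0.

Lemma in_l2_truncate s f : in_l2 ip (truncate s f).
Proof. by apply: (in_l2_finsupp (L := s)) => k /negbTE; rewrite /truncate => ->. Qed.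

Lemma in_l2_ket m v : in_l2 ip (ket m v).
Proof. by apply: (in_l2_finsupp (L := [:: m])) => k; rewrite inE /ket => /negbTE ->. Qed.

Lemma ket_sum (I : Type) (s : seq I) m (v : I -> E) k :
  \sum_(i <- s) ket m (v i) k = ket m (\sum_(i <- s) v i) k.
Proof. by rewrite /ket; case: eqP => // _; rewrite big1. Qed.

Variable U : state E -> state E.
Hypothesis U_unitary : unitary ip U.

Lemma unitary0 : U (fun _ => 0) = (fun _ => 0).
Proof.
case: U_unitary => lin _ _.
have l2_0 : in_l2 ip (fun _ : nat * nat => 0 : E) by apply: (in_l2_finsupp (L := [::])).
have := lin 0 0 _ _ l2_0 l2_0.
have scale00 (h : state E) : (fun m => 0 *: h m + 0 *: h m) = (fun _ => 0).
  by apply: functional_extensionality => m; rewrite scale0r addr0.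
by rewrite !scale00.
Qed.

Lemma unitaryD f g : in_l2 ip f -> in_l2 ip g ->
  U (fun k => f k + g k) = (fun k => U f k + U g k).
Proof.
case: U_unitary => lin _ _ f2 g2; have := lin 1 1 _ _ f2 g2.
have scale11 (h h' : state E) : (fun m => 1 *: h m + 1 *: h' m) = (fun m => h m + h' m).
  by apply: functional_extensionality => m; rewrite !scale1r.
by rewrite !scale11.
Qed.

Lemma unitary_truncate s f : uniq s ->
  U (truncate s f) = (fun k => \sum_(m <- s) U (ket m (f m)) k).
Proof.
elim: s => [_|m s IH /= /andP[ms us]].
  have -> : truncate [::] f = (fun _ => 0) by [].
  by rewrite unitary0; apply: functional_extensionality => k; rewrite big_nil.
have -> : truncate (m :: s) f = (fun k => ket m (f m) k + truncate s f k).
  apply: functional_extensionality => k; rewrite /truncate /ket inE.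
  by case: eqP => [->|_]; rewrite ?(negbTE ms) ?addr0 ?add0r.
rewrite unitaryD; [|exact: in_l2_ket|exact: in_l2_truncate].
apply: functional_extensionality => k; rewrite big_cons; congr (_ + _).
exact: (congr1 (@^~ k) (IH us)).
Qed.

Variables (e g01 g10 g00 : nat * nat -> E).
Hypothesis U_ket : forall m : nat * nat,
  U (ket m (e m)) =
    (fun k => ket (0, 1)%N (g01 m) k + ket (1, 0)%N (g10 m) k + ket (0, 0)%N (g00 m) k).

Lemma unitary_branch_nsq s : uniq s ->
  complex.Re (\sum_(m <- s) ip (e m) (e m)) =
  nsq ip (\sum_(m <- s) g01 m) + nsq ip (\sum_(m <- s) g10 m)
    + nsq ip (\sum_(m <- s) g00 m).
Proof.
move=> us.
set A := \sum_(m <- s) g01 m; set B := \sum_(m <- s) g10 m; set C := \sum_(m <- s) g00 m.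
pose G : state E := fun k => ket (0, 1)%N A k + ket (1, 0)%N B k + ket (0, 0)%N C k.
have UG : U (truncate s e) = G.
  rewrite unitary_truncate //; apply: functional_extensionality => k.
  by under eq_bigr do rewrite U_ket; rewrite !big_split /= !ket_sum.
have norm_trunc : l2_norm_sq ip (truncate s e) (\sum_(m <- s) ip (e m) (e m)).
  rewrite (eq_big_seq (fun m => ip (truncate s e m) (truncate s e m))); last first.
    by move=> m ms; rewrite /truncate ms.
  by apply: l2_norm_sq_finsupp => // k /negbTE; rewrite /truncate => ->.
have norm_G : l2_norm_sq ip G
    (\sum_(k <- [:: (0, 1)%N; (1, 0)%N; (0, 0)%N]) ip (G k) (G k)).
  apply: l2_norm_sq_finsupp => // k.
  rewrite !inE => /norP[/negbTE k01 /norP[/negbTE k10 /negbTE k00]].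
  by rewrite /G /ket k01 k10 k00 !addr0.
case: U_unitary => _ isometry _; have := isometry _ _ norm_trunc; rewrite UG.
move/Chas_sum_unique/(_ norm_G) => ->.
by rewrite !big_cons big_nil /G /ket /= !addr0 !add0r addrA !raddfD.
Qed.

Lemma unitary_branch_le s : uniq s ->
  nsq ip (\sum_(m <- s) g01 m) <= complex.Re (\sum_(m <- s) ip (e m) (e m)) /\
  nsq ip (\sum_(m <- s) g10 m) <= complex.Re (\sum_(m <- s) ip (e m) (e m)).
Proof.
move=> us; rewrite unitary_branch_nsq //.
have := nsq_ge0 ip_inner (\sum_(m <- s) g01 m).
have := nsq_ge0 ip_inner (\sum_(m <- s) g10 m).
have := nsq_ge0 ip_inner (\sum_(m <- s) g00 m).
by split; lra.
Qed.

End FockSpace.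

Theorem lemma1 (R : realType) (E : lmodType R[i]) (ip : E -> E -> R[i])
  (e : nat * nat -> E)
  (U : state E -> state E)
  (g01 g10 g00 : nat * nat -> E)
  (S0 S1 : E) (pdouble : R[i]) :
  is_hilbert ip ->
  (* |psi_0> = sum_m |m1,m0>_B |e_m>_E is a unit vector *)
  l2_norm_sq ip e 1 ->
  unitary ip U ->
  (forall m : nat * nat,
     U (ket m (e m)) =
       (fun k => ket (0, 1)%N (g01 m) k + ket (1, 0)%N (g10 m) k
                 + ket (0, 0)%N (g00 m) k)) ->
  (* S0 = sum_{m1>=1, m0>=1} g^{0,1}_m,  S1 = sum_{m1>=1, m0>=1} g^{1,0}_m *)
  Ehas_sum ip (fun m : nat * nat => (0 < m.1)%N && (0 < m.2)%N) g01 S0 ->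
  Ehas_sum ip (fun m : nat * nat => (0 < m.1)%N && (0 < m.2)%N) g10 S1 ->
  (* p_double = sum_{m1>=1, m0>=1} <e_m|e_m> *)
  Chas_sum (fun m : nat * nat => (0 < m.1)%N && (0 < m.2)%N)
    (fun m => ip (e m) (e m)) pdouble ->
  let h0 := (sqrtC 2)^-1 *: S0 in
  let h1 := (sqrtC 2)^-1 *: S1 in
  ip h0 h0 <= pdouble / 2 /\ ip h1 h1 <= pdouble / 2.
Proof.
move=> [ip_inner _] _ U_unitary U_ket sumS0 sumS1 sum_pd h0 h1.
have pd_ge0 : 0 <= pdouble.
  by apply: Chas_sum_ge0 sum_pd => m _; apply: ip_ge0.
have branch_le := unitary_branch_le ip_inner U_unitary U_ket.
have nsqS0 : nsq ip S0 <= complex.Re pdouble.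
  by apply: (Ehas_sum_nsq_le ip_inner _ sumS0 sum_pd) => s /branch_le[].
have nsqS1 : nsq ip S1 <= complex.Re pdouble.
  by apply: (Ehas_sum_nsq_le ip_inner _ sumS1 sum_pd) => s /branch_le[].
by split; apply: nsq_half_le.
Qed.
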